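(* Fix a constant $c > 0$ and consider RLS-GP with $F = \{\mathrm{AND}, \mathrm{OR}\}$, $L = \{x_1, \ldots, x_n\}$, tree size limit $\ell \ge n$, target $h \in \{\mathrm{AND}_n, \mathrm{OR}_n\}$, using in each iteration a fresh training set of $s = n^c \lg^2 n$ inputs sampled uniformly at random from $\{0,1\}^n$, and terminating when the sampled error of its current solution is at most $c' \lg n$, where $c'$ is an appropriately large constant. Then with probability at least $1 - O(\log^2(n)/n)$, during the first $O(\log n)$ iterations and while the expected sampled error ($s$ times the generalisation error) of its current solution remains above $(c'/4)\lg n$, RLS-GP does not accept any mutation which (1) inserts a copy of a variable already present in the current solution, (2) inserts an undesired function node (an OR node when $h = \mathrm{AND}_n$, an AND node when $h = \mathrm{OR}_n$), or (3) increases the generalisation error of the current solution.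
   Context: Programs are finite rooted binary trees (the empty tree is allowed) whose internal nodes are labelled by binary Boolean functions from $F$ and whose leaves are labelled by literals from $L$; a program computes a Boolean function of $(x_1,\dots,x_n)$ in the obvious way. $\mathrm{AND}_n(x) = x_1 \wedge \dots \wedge x_n$, $\mathrm{OR}_n(x) = x_1 \vee \dots \vee x_n$. The generalisation error of $X$ is $|\{x \in \{0,1\}^n : X(x) \ne h(x)\}|/2^n$. In each iteration a fresh training set of $s$ inputs is drawn independently and uniformly at random from $\{0,1\}^n$; the sampled error $f(X)$ of a program $X$ in that iteration is the number of sampled inputs on which $X$ differs from $h$; parent and offspring are evaluated on the same training set. LeafCount$(X)$ is the number of leaves. HVL-Prime with subtree deletion, applied to a tree $X$: choose $op \in \{\mathrm{INS}, \mathrm{DEL}, \mathrm{SUB}\}$, a literal $l \in L$ and a function $g \in F$, independently and uniformly at random. If $X$ is empty, the result is the single leaf $l$. Otherwise: if $op = \mathrm{INS}$, choose a node $x$ of $X$ uniformly at random and replace it by a new node labelled $g$ whose two children are the subtree rooted at $x$ and a new leaf $l$, in uniformly random order; if $op = \mathrm{DEL}$, choose a node $x$ of $X$ (leaf or internal) uniformly at random and replace the parent of $x$ by the sibling of $x$; if $op = \mathrm{SUB}$, choose a leaf of $X$ uniformly at random and replace it by $l$. RLS-GP with tree size limit $\ell$: start with the empty tree $X$; in each iteration let $X' := $ HVL-Prime$(X)$, and if LeafCount$(X') \le \ell$ and $f(X') \le f(X)$ then set $X := X'$. $\lg$ is the base-2 logarithm; asymptotics are as $n \to \infty$. *)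

From HB Require Import structures.
From mathcomp Require Import all_boot all_order all_algebra.
From mathcomp Require Import reals exp.
Set Implicit Arguments. Unset Strict Implicit. Unset Printing Implicit Defensive.
Import Order.TTheory GRing.Theory Num.Theory.
Local Open Scope ring_scope.

Inductive fn := AND | OR.

(* Non-empty programs over literals L = {x_1, ..., x_n} (x_{i+1} is Leaf i). *)
Inductive tree (n : nat) : Type :=
| Leaf of 'I_n
| Node of fn & tree n & tree n.
Arguments Leaf {n}.
Arguments Node {n}.

(* A program is a possibly empty tree: None = the empty tree. *)
Definition program (n : nat) := option (tree n).

Definition input (n : nat) := {ffun 'I_n -> bool}.

Section Trees.
Variable n : nat.

Fixpoint tsize (t : tree n) : nat :=
  match t with Leaf _ => 1 | Node _ a b => (tsize a + tsize b).+1 end.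

Fixpoint nleaves (t : tree n) : nat :=
  match t with Leaf _ => 1 | Node _ a b => (nleaves a + nleaves b) end.

Definition LeafCount (X : program n) : nat :=
  if X is Some t then nleaves t else 0.

Fixpoint has_var (i : 'I_n) (t : tree n) : bool :=
  match t with Leaf j => j == i | Node _ a b => has_var i a || has_var i b end.

Fixpoint eval (t : tree n) (x : input n) : bool :=
  match t with
  | Leaf i => x i
  | Node AND a b => eval a x && eval b x
  | Node OR a b => eval a x || eval b x
  end.

Definition target (tgt : fn) (x : input n) : bool :=
  match tgt with
  | AND => [forall i, x i]
  | OR => [exists i, x i]
  end.

Definition undesired (tgt g : fn) : bool :=
  match tgt, g with AND, OR | OR, AND => true | _, _ => false end.

(* Nodes are indexed in preorder, starting with the root at index 0.
   mod_at f t k replaces the subtree rooted at node k by f of it. *)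
Fixpoint mod_at (f : tree n -> tree n) (t : tree n) (k : nat) {struct t} : tree n :=
  if k is k'.+1 then
    match t with
    | Leaf _ => t
    | Node g a b =>
        if (k' < tsize a)%N then Node g (mod_at f a k') b
        else Node g a (mod_at f b (k' - tsize a))
    end
  else f t.

(* del_at t k: replace the parent of node k by the sibling of node k;
   deleting the root (k = 0) yields the empty tree. *)
Fixpoint del_at (t : tree n) (k : nat) {struct t} : program n :=
  if k is k'.+1 then
    match t with
    | Leaf _ => Some t
    | Node g a b =>
        if k' == 0%N then Some b
        else if k' == tsize a then Some a
        else if (k' < tsize a)%N then Some (Node g (odflt a (del_at a k')) b)
        else Some (Node g a (odflt b (del_at b (k' - tsize a))))
    end
  else None.

(* sub_leaf l t j: replace the j-th leaf (left to right, from 0) by l. *)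
Fixpoint sub_leaf (l : 'I_n) (t : tree n) (j : nat) : tree n :=
  match t with
  | Leaf _ => Leaf l
  | Node g a b =>
      if (j < nleaves a)%N then Node g (sub_leaf l a j) b
      else Node g a (sub_leaf l b (j - nleaves a))
  end.

End Trees.

Section Process.
Variable R : realType.

Definition avg (T : finType) (F : T -> R) : R := (\sum_(t : T) F t) / #|T|%:R.

Definition avg_fn (F : fn -> R) : R := (F AND + F OR) / 2.

Variables (n ell : nat) (tgt : fn).

(* Generalisation error; the empty program is taken to be wrong everywhere. *)
Definition gen_err (X : program n) : R :=
  if X is Some t then
    #|[set x : input n | eval t x != target tgt x]|%:R / (2 ^ n)%:R
  else 1.

(* Sampled error on a training set S of s inputs; the empty program is wrong
   on every sampled input. *)
Definition samp_err (s : nat) (S : {ffun 'I_s -> input n}) (X : program n) : nat :=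
  if X is Some t then #|[set i : 'I_s | eval t (S i) != target tgt (S i)]|
  else s.

(* Expectation of F (X', flag) over one application of HVL-Prime (with subtree
   deletion) to X; flag is true iff the mutation is an insertion (op = INS)
   that (1) inserts a variable already present in X or (2) inserts an
   undesired function node. *)
Definition mut_exp (F : program n -> bool -> R) (X : program n) : R :=
  match X with
  | None => avg (fun l : 'I_n => F (Some (Leaf l)) false)
  | Some t =>
      (avg (fun l : 'I_n => avg_fn (fun g =>
         avg (fun k : 'I_(tsize t) => avg (fun b : bool =>
           F (Some (mod_at (fun u => if b then Node g u (Leaf l) else Node g (Leaf l) u) t k))
             (has_var l t || undesired tgt g)))))
     + avg (fun k : 'I_(tsize t) => F (del_at t k) false)
     + avg (fun l : 'I_n => avg (fun j : 'I_(nleaves t) => F (Some (sub_leaf l t j)) false)))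
      / 3
  end.

Definition lg (x : R) : R := ln x / ln 2.

Variables (s : nat) (c' : R).

(* Probability that, within the next T iterations of RLS-GP started from X,
   RLS-GP accepts a mutation of type (1), (2) or (3) in an iteration before
   it terminates and while the expected sampled error s * gen_err of the
   current solution has stayed above (c'/4) lg n. In each iteration a fresh
   training set of s uniform inputs is drawn; RLS-GP terminates if the sampled
   error of the current solution is at most c' lg n; otherwise it mutates and
   accepts X' iff LeafCount X' <= ell and f(X') <= f(X). *)
Fixpoint pbad (T : nat) (X : program n) : R :=
  match T with
  | 0 => 0
  | T'.+1 =>
      if s%:R * gen_err X <= (c' / 4) * lg n%:R then 0 else
      avg (fun S : {ffun 'I_s -> input n} =>
        if (samp_err S X)%:R <= c' * lg n%:R then 0 else
        mut_exp (fun X' flag =>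
          if (LeafCount X' <= ell)%N && (samp_err S X' <= samp_err S X)%N then
            (if flag || (gen_err X < gen_err X') then 1 else pbad T' X')
          else pbad T' X) X)
  end.

End Process.

Definition train_size (R : realType) (c : R) (n : nat) : nat :=
  `|Num.ceil (n%:R `^ c * lg n%:R ^+ 2)|%N.

Arguments pbad {R} n ell tgt s c' T X.

(* Call a program pure if every function node is the desired one (AND for AND_n, OR for
   OR_n) and no variable occurs twice.  A pure tree on d variables errs exactly on the
   2^(n-d) - 1 inputs that take the neutral value of the target on all its variables
   without being constant, so its generalisation error is below 2^-d.  From a pure tree a
   mutation either yields a pure tree that is no worse, or inserts a variable already
   present (probability at most d/n), or makes wrong a subcube of density 2^-(d+1) on
   which the tree was right: an undesired node, or a deletion or substitution that loses a
   variable.  As the sampled error must not grow, the latter is accepted only if no sample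
   hits that subcube, which happens with probability (1 - 2^-(d+1))^s.  While s 2^-d
   exceeds (c'/4) lg n this is at most 1/n and d = O(log n), so each iteration goes wrong
   with probability O(log n / n); a union bound over O(log n) iterations concludes. *)

From HB Require Import structures.
From mathcomp Require Import all_boot all_order all_algebra.
From mathcomp Require Import reals exp sequences.
From mathcomp Require Import zify ring lra.
(* Imported last so that [tsize] is the size of a tree, not of a tuple. *)
Set Implicit Arguments. Unset Strict Implicit. Unset Printing Implicit Defensive.
Import Order.TTheory GRing.Theory Num.Theory.

Definition eqfn (f g : fn) : bool :=
  match f, g with AND, AND | OR, OR => true | _, _ => false end.

Lemma eqfnP : Equality.axiom eqfn.
Proof. by do 2 case; constructor. Qed.

HB.instance Definition _ := hasDecEq.Build fn eqfnP.

Definition fn_op (g : fn) (p q : bool) : bool := if g is AND then p && q else p || q.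

Definition neutral (g : fn) : bool := if g is AND then true else false.

Lemma fn_op_neutralE g p q :
  (fn_op g p q == neutral g) = (p == neutral g) && (q == neutral g).
Proof. by case: g; case: p; case: q. Qed.

Lemma fn_op_id g v : fn_op g v v = v.
Proof. by case: g; case: v. Qed.

Lemma fn_op_absorb g0 g p :
  g != g0 -> fn_op g (neutral g0) p = neutral g0 /\ fn_op g p (neutral g0) = neutral g0.
Proof. by case: g; case: g0; case: p. Qed.

Lemma fn_op_stablel g v p p' q : (p = v -> p' = v) -> fn_op g p q = v -> fn_op g p' q = v.
Proof. by case: g v p p' q => [] [] [] [] [] //= H _; apply: H. Qed.

Lemma fn_op_stabler g v p q q' : (q = v -> q' = v) -> fn_op g p q = v -> fn_op g p q' = v.
Proof. by case: g v p q q' => [] [] [] [] [] //= H _; apply: H. Qed.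

Section Tree.
Variable n : nat.
Implicit Types (t u a b : tree n) (x : input n).

Fixpoint all_fn g0 t : bool :=
  if t is Node g a b then [&& g == g0, all_fn g0 a & all_fn g0 b] else true.

Fixpoint distinct_vars t : bool :=
  if t is Node _ a b then
    [&& distinct_vars a, distinct_vars b & [forall i, ~~ (has_var i a && has_var i b)]]
  else true.

Lemma eval_Node g a b x : eval (Node g a b) x = fn_op g (eval a x) (eval b x).
Proof. by case: g. Qed.

Lemma exists_has_var t : exists i, has_var i t.
Proof. by elim: t => [i|g a [i Hi] b _] /=; exists i; rewrite ?Hi. Qed.

Lemma eval_vars_const t x v : (forall i, has_var i t -> x i = v) -> eval t x = v.
Proof.
elim: t => [i|g a IHa b IHb] H; first by apply: H; rewrite /= eqxx.
by rewrite eval_Node IHa ?IHb ?fn_op_id // => i Hi; apply: H; rewrite /= Hi ?orbT.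
Qed.

Lemma all_fn_eval g0 t x : all_fn g0 t ->
  (eval t x == neutral g0) = [forall i, has_var i t ==> (x i == neutral g0)].
Proof.
elim: t => [j|g a IHa b IHb].
  move=> _ /=; apply/idP/forallP => [/eqP <- i|/(_ j)]; last by rewrite eqxx.
  by apply/implyP => /eqP ->.
case/and3P => /eqP -> Ha Hb; rewrite eval_Node fn_op_neutralE IHa // IHb //=.
apply/andP/forallP => [[/forallP Ha' /forallP Hb'] i|H].
  by apply/implyP => /orP [/(implyP (Ha' i))|/(implyP (Hb' i))].
by split; apply/forallP => i; apply/implyP => Hi; apply: (implyP (H i)); rewrite Hi ?orbT.
Qed.

Section ModAt.
Variable f : tree n -> tree n.

Lemma has_var_mod_at l i t k : (forall u, has_var i (f u) = has_var i u || (i == l)) ->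
  (k < tsize t)%N -> has_var i (mod_at f t k) = has_var i t || (i == l).
Proof.
move=> Hf; elim: t k => [j|g a IHa b IHb] [|k] //=; case: ifP => Hk /= Hlt.
  by rewrite IHa // -!orbA [has_var i b || _]orbC.
by rewrite IHb ?orbA //; move/negbT: Hk; rewrite -leqNgt => ?; lia.
Qed.

Lemma all_fn_mod_at g0 t k : (forall u, all_fn g0 u -> all_fn g0 (f u)) ->
  all_fn g0 t -> all_fn g0 (mod_at f t k).
Proof.
move=> Hf; elim: t k => [j|g a IHa b IHb] [|k]; try exact: Hf; first by [].
by move=> /= /and3P [Hg Ha Hb]; case: ifP => _ /=; rewrite Hg ?IHa ?IHb ?Ha ?Hb.
Qed.

Lemma distinct_vars_mod_at l t k :
  (forall u, distinct_vars u -> ~~ has_var l u -> distinct_vars (f u)) ->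
  (forall u i, has_var i (f u) = has_var i u || (i == l)) ->
  ~~ has_var l t -> distinct_vars t -> (k < tsize t)%N -> distinct_vars (mod_at f t k).
Proof.
move=> Hf Hv; elim: t k => [j|g a IHa b IHb] [|k]; try by move=> H1 H2 _; apply: Hf.
  by [].
rewrite /= negb_or => /andP [Nla Nlb] /and3P [Da Db /forallP Dab] Hk.
case: ifP => Hka /=.
  rewrite IHa // Db /=; apply/forallP => i; rewrite (has_var_mod_at (Hv^~ i)) //.
  apply/negP => /andP [/orP [Hia|/eqP Eil] Hib]; first by move: (Dab i); rewrite Hia Hib.
  by move: Nlb; rewrite -Eil Hib.
have Hkb : (k - tsize a < tsize b)%N by move/negbT: Hka; rewrite -leqNgt => ?; lia.
rewrite IHb // Da /=; apply/forallP => i; rewrite (has_var_mod_at (Hv^~ i)) //.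
apply/negP => /andP [Hia /orP [Hib|/eqP Eil]]; first by move: (Dab i); rewrite Hia Hib.
by move: Nla; rewrite -Eil Hia.
Qed.

Lemma mod_at_NodeS g a b k : mod_at f (Node g a b) k.+1 =
  if (k < tsize a)%N then Node g (mod_at f a k) b else Node g a (mod_at f b (k - tsize a)).
Proof. by []. Qed.

Lemma eval_mod_at x v t k : (forall u, eval u x = v -> eval (f u) x = v) ->
  eval t x = v -> eval (mod_at f t k) x = v.
Proof.
move=> Hf; elim: t k => [j|g a IHa b IHb] [|k]; try exact: Hf; first by [].
rewrite mod_at_NodeS; case: ifP => _; rewrite !eval_Node.
  by apply: fn_op_stablel; apply: IHa.
by apply: fn_op_stabler; apply: IHb.
Qed.

(* [w] is any variable of the modified subtree; by distinctness it occurs nowhere else. *)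
Lemma eval_mod_at_pivot t k : distinct_vars t -> (k < tsize t)%N -> exists2 w, has_var w t &
  forall x v, (forall i, has_var i t -> i != w -> x i = v) ->
  (forall u, eval (f u) x = v) -> eval (mod_at f t k) x = v.
Proof.
elim: t k => [j|g a IHa b IHb] [|k] //.
- by move=> _ _; exists j => [|x v _]; [rewrite /= eqxx | apply].
- by move=> _ _; have [w Hw] := exists_has_var (Node g a b); exists w => // x v _; apply.
move=> /and3P [Da Db /forallP Dab] /= Hk; case: ifP => Hka.
  have [w Hw H] := IHa _ Da Hka; exists w => [|x v Hx Hf]; first by rewrite /= Hw.
  rewrite eval_Node (H x v) // => [|i Hi]; last by apply: Hx; rewrite /= ?Hi.
  rewrite (@eval_vars_const _ _ v) ?fn_op_id // => i Hi; apply: Hx; first by rewrite /= Hi orbT.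
  by apply/eqP => Eiw; move: (Dab i); rewrite Hi Eiw Hw.
have Hkb : (k - tsize a < tsize b)%N by move/negbT: Hka; rewrite -leqNgt => ?; lia.
have [w Hw H] := IHb _ Db Hkb; exists w => [|x v Hx Hf]; first by rewrite /= Hw orbT.
rewrite eval_Node (H x v) // => [|i Hi]; last by apply: Hx; rewrite /= ?Hi ?orbT.
rewrite (@eval_vars_const _ _ v) ?fn_op_id // => i Hi; apply: Hx; first by rewrite /= Hi.
by apply/eqP => Eiw; move: (Dab i); rewrite Hi Eiw Hw.
Qed.

End ModAt.
End Tree.

Section Edit.
Variable n : nat.
Implicit Types (t u a b : tree n).

Lemma del_at_pure g0 t k u : all_fn g0 t -> distinct_vars t -> del_at t k = Some u ->
  [/\ all_fn g0 u, distinct_vars u & forall i, has_var i u -> has_var i t].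
Proof.
elim: t k u => [j|g a IHa b IHb] [|k] u //=; first by move=> _ _ [<-].
move=> /and3P [Hg Ha Hb] /and3P [Da Db /forallP Dab].
have odflt_del v k' : all_fn g0 v -> distinct_vars v ->
    (forall u, del_at v k' = Some u ->
       [/\ all_fn g0 u, distinct_vars u & forall i, has_var i u -> has_var i v]) ->
  [/\ all_fn g0 (odflt v (del_at v k')), distinct_vars (odflt v (del_at v k')) &
     forall i, has_var i (odflt v (del_at v k')) -> has_var i v].
  by move=> Hv Dv IH; case: (del_at v k') IH => [w /(_ w erefl)|].
case: eqP => [_ [<-]|_]; first by split => // i ->; rewrite orbT.
case: eqP => [_ [<-]|_]; first by split => // i ->.
case: ifP => _ [<-].
  have [H1 H2 H3] := odflt_del a k Ha Da (fun u => IHa k u Ha Da).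
  split => /=; first by rewrite Hg H1 Hb.
    rewrite H2 Db /=; apply/forallP => i; apply/negP => /andP [/H3 Hi Hi'].
    by move: (Dab i); rewrite Hi Hi'.
  by move=> i /orP [/H3 ->|->]; rewrite ?orbT.
have [H1 H2 H3] := odflt_del b (k - tsize a) Hb Db (fun u => IHb _ u Hb Db).
split => /=; first by rewrite Hg H1 Ha.
  rewrite H2 Da /=; apply/forallP => i; apply/negP => /andP [Hi /H3 Hi'].
  by move: (Dab i); rewrite Hi Hi'.
by move=> i /orP [->|/H3 ->]; rewrite ?orbT.
Qed.

Fixpoint leaf_at t (j : nat) : 'I_n :=
  match t with
  | Leaf i => i
  | Node _ a b => if (j < nleaves a)%N then leaf_at a j else leaf_at b (j - nleaves a)
  end.

Lemma has_var_leaf_at t j : has_var (leaf_at t j) t.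
Proof.
elim: t j => [i|g a IHa b IHb] j /=; first exact: eqxx.
by case: ifP => _; rewrite ?IHa ?IHb ?orbT.
Qed.

Lemma all_fn_sub_leaf g0 l t j : all_fn g0 t -> all_fn g0 (sub_leaf l t j).
Proof.
elim: t j => [i|g a IHa b IHb] j //= /and3P [Hg Ha Hb].
by case: ifP => _ /=; rewrite Hg ?IHa ?IHb ?Ha ?Hb.
Qed.

Lemma has_var_sub_leaf l t j i : distinct_vars t ->
  has_var i (sub_leaf l t j) = (i == l) || has_var i t && (i != leaf_at t j).
Proof.
elim: t j => [i0|g a IHa b IHb] j /=.
  by move=> _; rewrite eq_sym; case: (i0 =P i) => [->|]; rewrite ?eqxx ?orbF.
move=> /and3P [Da Db /forallP Dab]; case: ifP => _ /=.
  rewrite IHa //; case Hib: (has_var i b); rewrite ?orbT ?orbF //=.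
  suff -> : i != leaf_at a j by rewrite !orbT.
  by apply/eqP => E; move: (Dab i); rewrite Hib E has_var_leaf_at.
rewrite IHb //; case Hia: (has_var i a); rewrite ?orbT ?orbF //=.
suff -> : i != leaf_at b (j - nleaves a) by rewrite orbT.
by apply/eqP => E; move: (Dab i); rewrite Hia E has_var_leaf_at.
Qed.

Lemma distinct_vars_sub_leaf l t j : distinct_vars t ->
  ~~ has_var l t || (l == leaf_at t j) -> distinct_vars (sub_leaf l t j).
Proof.
elim: t j => [i0|g a IHa b IHb] j //= /and3P [Da Db /forallP Dab]; case: ifP => _ /= Hl.
  rewrite IHa ?Db /=.
  - apply/forallP => i; rewrite has_var_sub_leaf //.
    apply/negP => /andP [/orP [/eqP Eil|/andP [Hia _]] Hib].
    + move: Hl; rewrite negb_or -Eil Hib andbF /= => /eqP E.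
      by move: (Dab i); rewrite Hib E has_var_leaf_at.
    + by move: (Dab i); rewrite Hia Hib.
  - by [].
  - by move: Hl; rewrite negb_or => /orP [/andP [-> _]|->]; rewrite ?orbT.
rewrite IHb ?Da /=.
- apply/forallP => i; rewrite has_var_sub_leaf //.
  apply/negP => /andP [Hia /orP [/eqP Eil|/andP [Hib _]]].
  + move: Hl; rewrite negb_or -Eil Hia /= => /eqP E.
    by move: (Dab i); rewrite Hia E has_var_leaf_at.
  + by move: (Dab i); rewrite Hia Hib.
- by [].
- by move: Hl; rewrite negb_or => /orP [/andP [_ ->]|->]; rewrite ?orbT.
Qed.

End Edit.

Section InsNode.
Variables (n : nat) (keep_left : bool) (g : fn) (l : 'I_n).
Implicit Types (u : tree n) (x : input n).

Definition ins_node u : tree n :=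
  if keep_left then Node g u (Leaf l) else Node g (Leaf l) u.

Lemma has_var_ins_node u i : has_var i (ins_node u) = has_var i u || (i == l).
Proof. by rewrite /ins_node; case: keep_left => /=; rewrite eq_sym // orbC. Qed.

Lemma all_fn_ins_node u : all_fn g u -> all_fn g (ins_node u).
Proof. by move=> Hu; rewrite /ins_node; case: keep_left; rewrite /= eqxx Hu. Qed.

Lemma distinct_vars_ins_node u :
  distinct_vars u -> ~~ has_var l u -> distinct_vars (ins_node u).
Proof.
move=> Du Nu; rewrite /ins_node; case: keep_left => /=; rewrite Du /= ?andbT;
  apply/forallP => i; apply/negP => /andP [].
  by move=> Hi /eqP Eil; rewrite Eil Hi in Nu.
by move=> /eqP <- Hi; rewrite Hi in Nu.
Qed.

Lemma eval_ins_node g0 u x : g != g0 -> eval u x = neutral g0 \/ x l = neutral g0 ->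
  eval (ins_node u) x = neutral g0.
Proof.
move=> Ng [] H; rewrite /ins_node; case: keep_left; rewrite eval_Node /= H.
- by case: (fn_op_absorb (x l) Ng).
- by case: (fn_op_absorb (x l) Ng).
- by case: (fn_op_absorb (eval u x) Ng).
- by case: (fn_op_absorb (eval u x) Ng).
Qed.

End InsNode.

Section Cube.
Variable n : nat.

Definition cube (A : {set 'I_n}) (a : 'I_n -> bool) : {set input n} :=
  [set x : input n | [forall i in A, x i == a i]].

Lemma cube_at A a x i : x \in cube A a -> i \in A -> x i = a i.
Proof. by rewrite inE => /forallP /(_ i) /implyP H /H /eqP. Qed.

Lemma card_cube A a : #|cube A a| = 2 ^ (n - #|A|).
Proof.
pose F i : pred bool := if i \in A then pred1 (a i) else predT.
have -> : #|cube A a| = #|(family F : simpl_pred {dffun forall i : 'I_n, bool})|.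
  apply: eq_card => x; rewrite inE; apply/forallP/familyP => H i; move: (H i); rewrite /F;
  by case: (i \in A) => //= /eqP.
rewrite card_family /image_mem foldrE big_map big_enum /=.
rewrite (bigID (mem A)) /= (eq_bigr (fun _ => 1)) => [|i Hi]; last by rewrite /F Hi card1.
rewrite big1_eq mul1n (eq_bigr (fun _ => 2)) => [|i /negbTE Hi]; last by rewrite /F Hi card_bool.
rewrite prod_nat_const; congr (_ ^ _).
have -> : #|[pred i | i \notin A]| = #|~: A| by apply: eq_card => i; rewrite !inE.
by have := cardsC A; rewrite card_ord => /(congr1 (subn^~ #|A|)); rewrite addKn.
Qed.

End Cube.

Section ErrSet.
Variables (n : nat) (tgt : fn).
Implicit Types (t u : tree n) (x : input n).
Local Notation b := (neutral tgt).

Definition vars t : {set 'I_n} := [set i | has_var i t].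

Definition err_set (X : program n) : {set input n} :=
  if X is Some t then [set x | eval t x != target tgt x] else setT.

(* RLS-GP only visits pure programs until it accepts a bad mutation. *)
Definition pure (X : program n) : bool :=
  if X is Some t then all_fn tgt t && distinct_vars t else true.

Definition spike (w i : 'I_n) : bool := if i == w then ~~ b else b.

Lemma target_neutral x : (target tgt x == b) = [forall i, x i == b].
Proof.
case: tgt => /=; first by rewrite eqb_id; apply: eq_forallb => i; rewrite eqb_id.
by rewrite eqbF_neg negb_exists; apply: eq_forallb => i; rewrite eqbF_neg.
Qed.

Lemma in_err_set t x :
  (x \in err_set (Some t)) = (eval t x == b) && ~~ [forall i, x i == b].
Proof.
rewrite inE; case: (boolP [forall i, x i == b]) => [H|H]; rewrite ?andbF ?andbT.
  have /eqP -> : target tgt x == b by rewrite target_neutral.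
  by rewrite (@eval_vars_const _ _ _ b) ?eqxx // => i _; apply/eqP; move/forallP: H.
have : (target tgt x == b) = false by rewrite target_neutral (negbTE H).
by case: (target tgt x) (eval t x) b => [] [] [].
Qed.

Lemma in_err_set_all_fn t x : all_fn tgt t -> (x \in err_set (Some t)) =
  [forall i, has_var i t ==> (x i == b)] && ~~ [forall i, x i == b].
Proof. by move=> Ht; rewrite in_err_set all_fn_eval. Qed.

Lemma card_err_set t : all_fn tgt t -> #|err_set (Some t)| = (2 ^ (n - #|vars t|)).-1.
Proof.
move=> Ht; rewrite -(card_cube _ (fun _ => b)).
have -> : err_set (Some t) = cube (vars t) (fun _ => b) :\ [ffun => b].
  apply/setP => x; rewrite in_err_set_all_fn // !inE andbC; congr (_ && _).
    congr (~~ _); apply/forallP/eqP => [H|-> i]; last by rewrite ffunE.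
    by apply/ffunP => i; rewrite ffunE; apply/eqP/H.
  by apply/forallP/forallP => H i; move: (H i); rewrite inE.
rewrite (cardsD1 [ffun => b] (cube _ _)) inE.
suff -> : [forall i in vars t, [ffun => b] i == b] by [].
by apply/forallP => i; rewrite ffunE eqxx implybT.
Qed.

Lemma card_err_set_None : #|err_set None| = 2 ^ n.
Proof. by rewrite /= cardsT card_ffun card_bool card_ord. Qed.

Lemma spike_not_const (A : {set 'I_n}) w x :
  w \in A -> x \in cube A (spike w) -> ~~ [forall i, x i == b].
Proof.
move=> Hw Hx; apply/negP => /forallP /(_ w); rewrite (cube_at Hx Hw) /spike eqxx.
by case: b.
Qed.

Lemma disjoint_spike_err_set t (A : {set 'I_n}) w : all_fn tgt t -> has_var w t -> w \in A ->
  [disjoint cube A (spike w) & err_set (Some t)].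
Proof.
move=> Ht Hw HwA; rewrite disjoint_subset; apply/subsetP => x Hx.
rewrite inE in_err_set_all_fn //; apply/negP => /andP [/forallP /(_ w)].
by rewrite Hw (cube_at Hx HwA) /spike eqxx; case: b.
Qed.

Lemma err_set_lose_var t u w : all_fn tgt t -> all_fn tgt u ->
  (forall i, has_var i u -> has_var i t) -> has_var w t -> ~~ has_var w u ->
  err_set (Some t) \subset err_set (Some u) /\ cube (vars t) (spike w) \subset err_set (Some u).
Proof.
move=> Ht Hu Hut Hw Nw; split; apply/subsetP => x.
  rewrite !in_err_set_all_fn // => /andP [/forallP H ->]; rewrite andbT.
  by apply/forallP => i; apply/implyP => /Hut Hi; move: (H i); rewrite Hi.
move=> Hx; rewrite in_err_set_all_fn // (spike_not_const _ Hx) ?inE // andbT.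
apply/forallP => i; apply/implyP => Hi; rewrite (cube_at Hx) ?inE ?Hut // /spike.
by case: (i =P w) => // E; move: Nw; rewrite -E Hi.
Qed.

End ErrSet.

Section GenErr.
Variables (R : realType) (n : nat) (tgt : fn).
Local Notation gen := (gen_err R tgt).
Local Open Scope ring_scope.

Lemma gen_errE (X : program n) : gen X = #|err_set tgt X|%:R / (2 ^ n)%:R.
Proof. by case: X => [t|] //; rewrite (card_err_set_None n tgt) divff // pnatr_eq0 expn_eq0. Qed.

Lemma gen_err_le1 (X : program n) : gen X <= 1.
Proof.
rewrite gen_errE ler_pdivrMr ?ltr0n ?expn_gt0 // mul1r ler_nat.
by rewrite -(card_err_set_None n tgt); apply/subset_leq_card/subsetT.
Qed.

Lemma gen_err_le_vars (t u : tree n) : all_fn tgt t -> all_fn tgt u ->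
  (#|vars t| <= #|vars u|)%N -> gen (Some u) <= gen (Some t).
Proof.
move=> Ht Hu H; rewrite !gen_errE ler_pM2r ?invr_gt0 ?ltr0n ?expn_gt0 //.
rewrite ler_nat !card_err_set // -!subn1 leq_sub2r // leq_pexp2l //.
exact: leq_sub2l.
Qed.

Lemma gen_err_all_fn (t : tree n) : all_fn tgt t -> gen (Some t) <= (2 ^ #|vars t|)%:R^-1.
Proof.
move=> Ht; rewrite gen_errE card_err_set //.
have dn : (#|vars t| <= n)%N by have := max_card (vars t); rewrite card_ord.
have -> : (2 ^ n = 2 ^ (n - #|vars t|) * 2 ^ #|vars t|)%N by rewrite -expnD subnK.
rewrite natrM invfM mulrA ler_pdivrMr ?ltr0n ?expn_gt0 // mulVf ?pnatr_eq0 ?expn_eq0 //.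
by rewrite ler_pdivrMr ?ltr0n ?expn_gt0 // mul1r ler_nat leq_pred.
Qed.

End GenErr.

Section Avg.
Variable R : realType.
Local Open Scope ring_scope.
Implicit Types (T A : finType).

Lemma ler_avg T (F G : T -> R) : (forall x, F x <= G x) -> avg F <= avg G.
Proof. by move=> H; rewrite /avg ler_wpM2r ?invr_ge0 ?ler0n // ler_sum. Qed.

Lemma avg_ge0 T (F : T -> R) : (forall x, 0 <= F x) -> 0 <= avg F.
Proof. by move=> H; rewrite /avg mulr_ge0 ?invr_ge0 ?ler0n ?sumr_ge0. Qed.

Lemma avg_cst T (c : R) : (0 < #|T|)%N -> avg (fun _ : T => c) = c.
Proof. by move=> H; rewrite /avg sumr_const -[c *+ _]mulr_natr mulfK // pnatr_eq0 -lt0n. Qed.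

(* The empty average is 0, hence the sign condition. *)
Lemma avg_le T (F : T -> R) c : 0 <= c -> (forall x, F x <= c) -> avg F <= c.
Proof.
move=> c0 H; case: (posnP #|T|) => HT; first by rewrite /avg HT invr0 mulr0.
by rewrite -(avg_cst c HT); apply: ler_avg.
Qed.

Lemma avgD T (F G : T -> R) : avg (fun x => F x + G x) = avg F + avg G.
Proof. by rewrite /avg big_split mulrDl. Qed.

Lemma avgMr T (F : T -> R) k : avg (fun x => F x * k) = avg F * k.
Proof. by rewrite /avg -mulr_suml mulrAC. Qed.

Lemma exchange_avg A T (F : A -> T -> R) :
  avg (fun a => avg (fun x => F a x)) = avg (fun x => avg (fun a => F a x)).
Proof.
rewrite /avg -!mulr_suml (exchange_big _ _ _ _ _ (fun a x => F a x)).
by rewrite -!mulrA [_^-1 * _]mulrC.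
Qed.

Lemma avg_indicator T (P : pred T) :
  avg (fun x => if P x then 1 else 0 : R) = #|[set x | P x]|%:R / #|T|%:R.
Proof.
congr (_ / _); rewrite -sum1_card natr_sum [RHS]big_mkcond /=.
by apply: eq_bigr => x _; rewrite inE.
Qed.

Lemma avg_fn_le (F : fn -> R) c : (forall g, F g <= c) -> avg_fn F <= c.
Proof. by move=> H; rewrite /avg_fn ler_pdivrMr ?ltr0n // mulr_natr mulr2n lerD. Qed.

Lemma avg_fn_ge0 (F : fn -> R) : (forall g, 0 <= F g) -> 0 <= avg_fn F.
Proof. by move=> H; rewrite /avg_fn divr_ge0 ?addr_ge0. Qed.

Lemma exchange_avg_fn T (F : fn -> T -> R) :
  avg (fun x => avg_fn (fun g => F g x)) = avg_fn (fun g => avg (F g)).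
Proof. by rewrite /avg_fn avgMr avgD. Qed.

Lemma prob_samples_avoid (T : finType) s (C : {set T}) :
  avg (fun S : {ffun 'I_s -> T} => if [forall i, S i \notin C] then 1 else 0 : R)
  = ((#|T| - #|C|)%:R / #|T|%:R) ^+ s.
Proof.
rewrite avg_indicator.
have -> : #|[set S : {ffun 'I_s -> T} | [forall i, S i \notin C]]| = (#|~: C| ^ s)%N.
  rewrite -[in RHS](card_ord s) -card_ffun_on; apply: eq_card => S; rewrite inE.
  by apply/forallP/ffun_onP => H i; move: (H i); rewrite inE.
rewrite card_ffun card_ord expr_div_n -!natrX.
by have := cardsC C => <-; rewrite addKn.
Qed.

End Avg.

Lemma samples_avoid (T : finType) s (S : 'I_s -> T) (A B C : {set T}) :
  A \subset B -> C \subset B -> [disjoint C & A] ->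
  (#|[set i | S i \in B]| <= #|[set i | S i \in A]|)%N -> [forall i, S i \notin C].
Proof.
move=> AB CB CA Hle.
have /eqP EAB : [set i | S i \in A] == [set i | S i \in B].
  rewrite eqEcard Hle andbT; apply/subsetP => i; rewrite !inE; exact: (subsetP AB).
apply/forallP => i; apply/negP => HC.
have : i \in [set i | S i \in B] by rewrite inE (subsetP CB).
rewrite -EAB inE => HA.
by move: CA; rewrite disjoint_subset => /subsetP /(_ _ HC); rewrite inE HA.
Qed.

Lemma undesiredE tgt g : undesired tgt g = (g != tgt).
Proof. by case: tgt; case: g. Qed.

Section Process.
Variables (R : realType) (n ell : nat) (tgt : fn) (s : nat) (c' : R).
Local Open Scope ring_scope.
Local Notation pb := (pbad n ell tgt s c').
Local Notation gen := (gen_err R tgt).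
Local Notation samp := (samp_err tgt).
Local Notation err := (err_set tgt).
Local Notation sample := {ffun 'I_s -> input n}.
Implicit Types (t u : tree n) (X Y : program n) (S : sample).

Definition pbad_next T S X X' (flag : bool) : R :=
  if (LeafCount X' <= ell)%N && (samp S X' <= samp S X)%N then
    (if flag || (gen X < gen X') then 1 else pb T X')
  else pb T X.

Lemma pbadS T X : pb T.+1 X =
  if s%:R * gen X <= c' / 4 * lg n%:R then 0 else
  avg (fun S : sample =>
    if (samp S X)%:R <= c' * lg n%:R then 0 else mut_exp tgt (pbad_next T S X) X).
Proof. by []. Qed.

Lemma mut_exp_le (F : program n -> bool -> R) X c :
  0 <= c -> (forall X' flag, F X' flag <= c) -> mut_exp tgt F X <= c.
Proof.
move=> c0 H; case: X => [t|] /=; last exact: avg_le.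
have mean3 (a b d : R) : a <= c -> b <= c -> d <= c -> (a + b + d) / 3 <= c by lra.
by apply: mean3; do ![apply: avg_le => // ? | apply: avg_fn_le => ?].
Qed.

Lemma mut_exp_ge0 (F : program n -> bool -> R) X :
  (forall X' flag, 0 <= F X' flag) -> 0 <= mut_exp tgt F X.
Proof.
move=> H; case: X => [t|] /=; last exact: avg_ge0.
by rewrite divr_ge0 // !addr_ge0 //; do ![apply: avg_ge0 => ? | apply: avg_fn_ge0 => ?].
Qed.

Lemma pbad_in01 T X : 0 <= pb T X <= 1.
Proof.
elim: T X => [|T IH] X; first by rewrite /= lexx ler01.
have next01 S X' flag : 0 <= pbad_next T S X X' flag <= 1.
  by rewrite /pbad_next; case: ifP => _; [case: ifP => _ |]; rewrite ?lexx ?ler01 ?IH.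
rewrite pbadS; case: ifP => _; first by rewrite lexx ler01.
apply/andP; split.
  apply: avg_ge0 => S; case: ifP => _ //.
  by apply: mut_exp_ge0 => X' f; case/andP: (next01 S X' f).
apply: avg_le => // S; case: ifP => _; first exact: ler01.
by apply: mut_exp_le => // X' f; case/andP: (next01 S X' f).
Qed.

Lemma pbad_next_ge0 T S X X' flag : 0 <= pbad_next T S X X' flag.
Proof.
rewrite /pbad_next; case: ifP => _; last by case/andP: (pbad_in01 T X).
by case: ifP => _ //; case/andP: (pbad_in01 T X').
Qed.

Lemma samp_errE S X : samp S X = #|[set i | S i \in err X]|.
Proof.
case: X => [t|] /=; first by apply: eq_card => i; rewrite !inE.
by rewrite -[LHS](card_ord s); apply: eq_card => i; rewrite !inE.
Qed.

Lemma pbad_next_le T e S X X' flag : pb T X <= e -> 0 <= e -> pbad_next T S X X' flag <= 1 + e.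
Proof.
move=> He e0; rewrite /pbad_next; case: ifP => _; last by rewrite (le_trans He) ?lerDr.
case: ifP => _; first by rewrite lerDl.
by case/andP: (pbad_in01 T X') => _ /le_trans; apply; rewrite lerDl.
Qed.

(* Rejection keeps [X]; acceptance requires every sample to miss the newly wrong set [C]. *)
Lemma avg_pbad_next_avoid T e X X' flag (C : {set input n}) : pb T X <= e -> 0 <= e ->
  err X \subset err X' -> C \subset err X' -> [disjoint C & err X] ->
  avg (fun S => pbad_next T S X X' flag) <= ((2 ^ n - #|C|)%:R / (2 ^ n)%:R) ^+ s + e.
Proof.
move=> He e0 sXX' sCX' dCX.
have card_input : #|input n| = (2 ^ n)%N by rewrite card_ffun card_bool card_ord.
rewrite -card_input -prob_samples_avoid -[X in _ + X](@avg_cst _ sample e).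
  rewrite -avgD; apply: ler_avg => S; rewrite /pbad_next; case: ifP => [/andP [_ Hs]|_].
    rewrite !samp_errE in Hs; rewrite (samples_avoid sXX' sCX' dCX Hs).
    case: ifP => _; first by rewrite lerDl.
    by case/andP: (pbad_in01 T X') => _ /le_trans; apply; rewrite lerDl.
  by apply: le_trans He _; rewrite lerDr; case: ifP.
by rewrite card_ffun card_ffun card_bool !expn_gt0.
Qed.

(* Probability that [s] uniform samples all miss a fixed set of density [2^-(d+1)]. *)
Definition miss_prob (d : nat) : R := (1 - (2 ^ d.+1)%:R^-1) ^+ s.

Lemma subr_inv_pow2_ge0 k : 0 <= 1 - (2 ^ k)%:R^-1 :> R.
Proof. by rewrite subr_ge0 invf_le1 ?ltr0n ?expn_gt0 // (ler_nat R 1) expn_gt0. Qed.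

Lemma miss_prob_ge0 d : 0 <= miss_prob d.
Proof. exact/exprn_ge0/subr_inv_pow2_ge0. Qed.

Lemma avoid_prob_le_miss_prob k d : (k <= n)%N -> (k <= d.+1)%N ->
  ((2 ^ n - 2 ^ (n - k))%:R / (2 ^ n)%:R) ^+ s <= miss_prob d.
Proof.
move=> Hkn Hkd.
have -> : (2 ^ n - 2 ^ (n - k))%:R / (2 ^ n)%:R = 1 - (2 ^ k)%:R^-1 :> R.
  rewrite -{1 3}(subnK Hkn) expnD natrB ?leq_pmulr ?expn_gt0 // natrM.
  by field; rewrite !pnatr_eq0 !expn_eq0.
rewrite /miss_prob lerXn2r ?nnegrE ?subr_inv_pow2_ge0 // lerD2l lerN2.
by rewrite lef_pV2 ?posrE ?ltr0n ?expn_gt0 // ler_nat leq_pexp2l.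
Qed.

Lemma avg_pbad_next_spike T e t X' flag (A : {set 'I_n}) w :
  all_fn tgt t -> 0 <= e -> pb T (Some t) <= e ->
  has_var w t -> w \in A -> (#|A| <= #|vars t|.+1)%N ->
  err (Some t) \subset err X' -> cube A (spike tgt w) \subset err X' ->
  avg (fun S => pbad_next T S (Some t) X' flag) <= miss_prob #|vars t| + e.
Proof.
move=> Ht e0 He Hw HwA HA sX sC.
apply: le_trans (avg_pbad_next_avoid flag He e0 sX sC (disjoint_spike_err_set Ht Hw HwA)) _.
rewrite lerD2r card_cube; apply: avoid_prob_le_miss_prob HA.
by have := max_card A; rewrite card_ord.
Qed.

Section OneStep.
Variables (T : nat) (e : R).
Hypotheses (e_ge0 : 0 <= e) (pbad_pure : forall Y, pure tgt Y -> pb T Y <= e).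

Lemma avg_pbad_next_safe X X' : pure tgt X -> pure tgt X' -> gen X' <= gen X ->
  avg (fun S => pbad_next T S X X' false) <= e.
Proof.
move=> PX PX' Hg; apply: avg_le => // S; rewrite /pbad_next.
by case: ifP => _; rewrite /= ?ltNge ?Hg /=; apply: pbad_pure.
Qed.

Lemma avg_pbad_next_ins t l g k (keep_left : bool) : pure tgt (Some t) -> (k < tsize t)%N ->
  avg (fun S => pbad_next T S (Some t) (Some (mod_at (ins_node keep_left g l) t k))
                  (has_var l t || undesired tgt g))
  <= (if has_var l t then 1 else miss_prob #|vars t|) + e.
Proof.
move=> Pt Hk; have He := pbad_pure Pt; case/andP: (Pt) => Ht Dt.
case Hl: (has_var l t).
  by apply: avg_le => [|S]; [rewrite addr_ge0 | apply: pbad_next_le].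
have Hv i := has_var_mod_at (has_var_ins_node keep_left g l ^~ i) Hk.
rewrite undesiredE; case: (eqVneq g tgt) => [Eg|Ng].
  apply: (@le_trans _ _ e); last by rewrite lerDr miss_prob_ge0.
  have At' : all_fn tgt (mod_at (ins_node keep_left g l) t k).
    by rewrite -Eg in Ht *; apply: all_fn_mod_at => // u; apply: all_fn_ins_node.
  apply: avg_pbad_next_safe => //.
    rewrite /pure At' (distinct_vars_mod_at (l := l)) ?Hl //.
      exact: distinct_vars_ins_node.
    exact: has_var_ins_node.
  by apply/gen_err_le_vars/subset_leq_card/subsetP => // i; rewrite !inE Hv => ->.
have [w Hw Hpivot] := eval_mod_at_pivot (ins_node keep_left g l) Dt Hk.
have Hwl : w != l by apply: contraTneq Hw => ->; rewrite Hl.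
apply: (@avg_pbad_next_spike T e t _ _ (l |: vars t) w Ht e_ge0 He Hw).
- by rewrite !inE Hw orbT.
- by rewrite cardsU1; case: (_ \notin _).
- apply/subsetP => x; rewrite !in_err_set => /andP [/eqP Hb ->]; rewrite andbT.
  apply/eqP; apply: (eval_mod_at _ _ Hb) => u Hu.
  by apply: eval_ins_node => //; left.
- apply/subsetP => x Hx; rewrite in_err_set (spike_not_const _ Hx) ?andbT; last first.
    by rewrite !inE Hw orbT.
  apply/eqP; apply: Hpivot => [i Hi Hiw|u].
    by rewrite (cube_at Hx) /spike ?(negbTE Hiw) // !inE Hi orbT.
  apply: eval_ins_node => //; right.
  by rewrite (cube_at Hx) /spike ?(eq_sym l) ?(negbTE Hwl) // !inE eqxx.
Qed.

Lemma avg_pbad_next_del t k : pure tgt (Some t) ->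
  avg (fun S => pbad_next T S (Some t) (del_at t k) false) <= miss_prob #|vars t| + e.
Proof.
move=> Pt; have He := pbad_pure Pt; case/andP: (Pt) => Ht Dt.
case Ed: (del_at t k) => [u|]; last first.
  have [w Hw] := exists_has_var t.
  by apply: (@avg_pbad_next_spike T e t None _ (vars t) w) => //; rewrite ?inE ?subsetT.
have [Hu Du Hut] := del_at_pure Ht Dt Ed.
case: (boolP [forall i, has_var i t ==> has_var i u]) => [/forallP Htu|].
  apply: (@le_trans _ _ e); last by rewrite lerDr miss_prob_ge0.
  apply: avg_pbad_next_safe; rewrite //= ?Hu ?Du //.
  apply/gen_err_le_vars/subset_leq_card/subsetP => // i.
  by rewrite !inE => /(implyP (Htu i)).
rewrite negb_forall => /existsP [w]; rewrite negb_imply => /andP [Hw Nw].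
have [sE sC] := err_set_lose_var Ht Hu Hut Hw Nw.
by apply: (@avg_pbad_next_spike T e t _ _ (vars t) w) => //; rewrite inE.
Qed.

Lemma avg_pbad_next_sub t l j : pure tgt (Some t) ->
  avg (fun S => pbad_next T S (Some t) (Some (sub_leaf l t j)) false) <= miss_prob #|vars t| + e.
Proof.
move=> Pt; have He := pbad_pure Pt; case/andP: (Pt) => Ht Dt.
set w := leaf_at t j; have Hw : has_var w t := has_var_leaf_at t j.
have Hv i := has_var_sub_leaf l j i Dt.
have Hu : all_fn tgt (sub_leaf l t j) := all_fn_sub_leaf l j Ht.
case: (boolP (has_var l t && (l != w))) => [/andP [Hlt Hlw]|].
  have Hut i : has_var i (sub_leaf l t j) -> has_var i t.
    by rewrite Hv -/w => /orP [/eqP ->|/andP []].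
  have Nw : ~~ has_var w (sub_leaf l t j) by rewrite Hv -/w eqxx andbF orbF eq_sym.
  have [sE sC] := err_set_lose_var Ht Hu Hut Hw Nw.
  by apply: (@avg_pbad_next_spike T e t _ _ (vars t) w) => //; rewrite inE.
rewrite negb_and negbK => Hl.
apply: (@le_trans _ _ e); last by rewrite lerDr miss_prob_ge0.
apply: avg_pbad_next_safe; rewrite //= ?Hu ?distinct_vars_sub_leaf //.
apply: gen_err_le_vars => //.
have -> : vars (sub_leaf l t j) = l |: (vars t :\ w).
  by apply/setP => i; rewrite !inE Hv -/w andbC.
rewrite cardsU1 (cardsD1 w (vars t)) inE Hw.
suff -> : l \notin vars t :\ w by [].
by rewrite !inE; case/orP: Hl => [/negbTE ->|/eqP ->]; rewrite ?andbF ?eqxx.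
Qed.

Lemma avg_pbad_next_insertions t : pure tgt (Some t) ->
  avg (fun S => avg (fun l => avg_fn (fun g => avg (fun k : 'I_(tsize t) =>
    avg (fun keep_left : bool =>
      pbad_next T S (Some t) (Some (mod_at (ins_node keep_left g l) t k))
        (has_var l t || undesired tgt g))))))
  <= #|vars t|%:R / n%:R + miss_prob #|vars t| + e.
Proof.
move=> Pt; set d := #|vars t|.
have [w0 _] := exists_has_var t; have n0 : (0 < n)%N by case: w0 => m; case: n.
have bound0 (l : 'I_n) : 0 <= (if has_var l t then 1 else miss_prob d) + e.
  by rewrite addr_ge0 //; case: ifP; rewrite ?ler01 ?miss_prob_ge0.
rewrite exchange_avg; apply: (@le_trans _ _ (avg (fun l : 'I_n =>
  (if has_var l t then 1 else miss_prob d) + e))).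
  apply: ler_avg => l; rewrite exchange_avg_fn; apply: avg_fn_le => g.
  rewrite exchange_avg; apply: avg_le => // k; rewrite exchange_avg; apply: avg_le => // b.
  exact: avg_pbad_next_ins.
rewrite avgD avg_cst ?card_ord // lerD2r.
apply: (@le_trans _ _ (avg (fun l : 'I_n => (if has_var l t then 1 else 0) + miss_prob d))).
  by apply: ler_avg => l; case: ifP; rewrite ?add0r ?lerDl ?miss_prob_ge0.
by rewrite avgD avg_cst ?card_ord // avg_indicator card_ord.
Qed.

Lemma avg_mut_exp_pure t : pure tgt (Some t) ->
  avg (fun S => mut_exp tgt (pbad_next T S (Some t)) (Some t))
  <= #|vars t|%:R / n%:R + miss_prob #|vars t| + e.
Proof.
move=> Pt; rewrite /mut_exp avgMr !avgD.
have mean3 (a b d m p : R) : 0 <= m -> a <= m + p + e -> b <= p + e -> d <= p + e ->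
  (a + b + d) / 3 <= m + p + e by lra.
apply: mean3.
- by rewrite divr_ge0 ?ler0n.
- exact: avg_pbad_next_insertions.
- rewrite exchange_avg; apply: avg_le => [|k]; last exact: avg_pbad_next_del.
  by rewrite addr_ge0 ?miss_prob_ge0.
- rewrite exchange_avg; apply: avg_le => [|l]; first by rewrite addr_ge0 ?miss_prob_ge0.
  rewrite exchange_avg; apply: avg_le => [|j]; last exact: avg_pbad_next_sub.
  by rewrite addr_ge0 ?miss_prob_ge0.
Qed.

End OneStep.

Lemma pbad_le_union e : 0 <= e ->
  (forall t, pure tgt (Some t) -> c' / 4 * lg n%:R < s%:R * gen (Some t) ->
     #|vars t|%:R / n%:R + miss_prob #|vars t| <= e) ->
  forall T X, pure tgt X -> pb T X <= T%:R * e.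
Proof.
move=> e0 Hstep; elim=> [|T IH] X PX; first by rewrite mul0r.
have Te0 : 0 <= T%:R * e by rewrite mulr_ge0.
have -> : T.+1%:R * e = T%:R * e + e by rewrite -addn1 natrD mulrDl mul1r.
rewrite pbadS; case: ifP => Hgen; first by rewrite addr_ge0.
apply: (@le_trans _ _ (avg (fun S => mut_exp tgt (pbad_next T S X) X))).
  apply: ler_avg => S; case: ifP => _ //.
  by apply: mut_exp_ge0 => X' f; apply: pbad_next_ge0.
case: X PX Hgen => [t|] PX Hgen.
  apply: le_trans (avg_mut_exp_pure Te0 IH PX) _.
  by rewrite [_ + e]addrC lerD2r Hstep // ltNge Hgen.
apply: (@le_trans _ _ (T%:R * e)); last by rewrite lerDl.
rewrite exchange_avg; apply: avg_le => // l.
by apply: (avg_pbad_next_safe Te0 IH) => //; apply: gen_err_le1.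
Qed.

End Process.

Section Asymptotics.
Variable R : realType.
Local Open Scope ring_scope.

Lemma ln2_gt0 : 0 < ln (2 : R).
Proof. by rewrite ln_gt0 // ltr1n. Qed.

Lemma ln_lg (x : R) : ln x = lg x * ln 2.
Proof. by rewrite /lg mulfVK // gt_eqF // ln2_gt0. Qed.

Lemma lg_ge1 n : (2 <= n)%N -> 1 <= lg (n%:R : R).
Proof.
move=> Hn; rewrite /lg ler_pdivlMr ?ln2_gt0 // mul1r ler_ln ?posrE ?ltr0n ?ler_nat //.
exact: leq_trans Hn.
Qed.

Lemma train_size_le (c : R) n : (2 <= n)%N ->
  (train_size c n)%:R <= n%:R `^ c * lg (n%:R : R) ^+ 2 + 1.
Proof.
move=> Hn; rewrite /train_size; set y := _ * _.
have y0 : 0 <= y by rewrite mulr_ge0 ?powR_ge0 // sqr_ge0.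
have c0 : 0 <= Num.ceil y by rewrite ceil_ge0 (lt_le_trans _ y0) // ltrN10.
rewrite natr_absz ger0_norm //; case/andP: (ceil_itv y) => + _.
by rewrite rmorphB /=; lra.
Qed.

Lemma one_sub_expn_le (a : R) s : a <= 1 -> (1 - a) ^+ s <= expR (- (s%:R * a)).
Proof.
move=> a1; rewrite -mulrN expRM_natl lerXn2r ?nnegrE ?expR_ge0 ?subr_ge0 //.
exact: expR_ge1Dx.
Qed.

Lemma miss_prob_le_invn (c' : R) n d s : 8 * ln 2 <= c' -> (2 <= n)%N ->
  c' / 4 * lg n%:R < s%:R / (2 ^ d)%:R -> miss_prob R s d <= n%:R^-1.
Proof.
move=> Hc' Hn H; have n0 : (0 : R) < n%:R by rewrite ltr0n (ltnW Hn).
have L1 := lg_ge1 Hn.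
apply: le_trans (one_sub_expn_le _ _) _.
  by rewrite invf_le1 ?ltr0n ?expn_gt0 // (ler_nat R 1) expn_gt0.
have -> : (n%:R : R)^-1 = expR (- ln n%:R) by rewrite expRN lnK ?posrE.
rewrite ler_expR lerN2 ln_lg.
have -> : s%:R / (2 ^ d.+1)%:R = s%:R / (2 ^ d)%:R / 2 :> R.
  by rewrite expnS natrM; field; rewrite pnatr_eq0 expn_eq0.
have H2 : c' / 4 * lg n%:R / 2 < s%:R / (2 ^ d)%:R / 2 by rewrite ltr_pM2r // invr_gt0 ltr0n.
apply: le_trans (ltW H2); nra.
Qed.

Lemma dim_le_lg (c c' : R) n d : 0 < c -> 8 <= c' -> (2 <= n)%N ->
  c' / 4 * lg n%:R < (train_size c n)%:R / (2 ^ d)%:R ->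
  d%:R <= (c + 2 / ln 2) * lg (n%:R : R).
Proof.
move=> c0 Hc' Hn H; set L := lg (n%:R : R); set s := train_size c n.
have l2 := @ln2_gt0; have L1 : 1 <= L := lg_ge1 Hn.
have n0 : (0 : R) < n%:R by rewrite ltr0n (ltnW Hn).
have P0 : (0 : R) < (2 ^ d)%:R by rewrite ltr0n expn_gt0.
set y := n%:R `^ c * L ^+ 2.
have y0 : 0 < y by rewrite mulr_gt0 ?powR_gt0 ?exprn_gt0 // (lt_le_trans ltr01).
have sy : s%:R <= y + 1 := train_size_le c Hn.
have Hd : (2 ^ d)%:R < y.
  have : (2 : R) < s%:R / (2 ^ d)%:R.
    by apply: (le_lt_trans _ H); rewrite -[2 : R]mulr1 ler_pM //; lra.
  rewrite ltr_pdivlMr // => H2; have : (1 : R) <= (2 ^ d)%:R by rewrite (ler_nat R 1) expn_gt0.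
  lra.
have L0 : 0 < L by exact: lt_le_trans ltr01 L1.
have lny : ln y <= c * ln n%:R + 2 * L.
  rewrite /y lnM ?posrE ?powR_gt0 ?exprn_gt0 // ln_powR lnXn // lerD2l.
  by have := ln_sublinear L0; lra.
have : d%:R * ln 2 < c * ln n%:R + 2 * L.
  rewrite mulr_natl -lnXn // -natrX (lt_le_trans _ lny) //.
  by rewrite ltr_ln ?posrE ?ltr0n ?expn_gt0.
rewrite [ln n%:R]ln_lg -/L -(ler_pM2r l2) => /ltW /le_trans; apply.
by rewrite le_eqVlt; apply/orP; left; apply/eqP; field; rewrite gt_eqF.
Qed.

Lemma step_bad_le (c c' : R) n tgt (t : tree n) :
  0 < c -> 8 + 8 * ln 2 <= c' -> (2 <= n)%N -> all_fn tgt t ->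
  c' / 4 * lg n%:R < (train_size c n)%:R * gen_err R tgt (Some t) ->
  #|vars t|%:R / n%:R + miss_prob R (train_size c n) #|vars t|
    <= ((c + 2 / ln 2) * lg n%:R + 1) / n%:R.
Proof.
move=> c0 Hc' Hn Ht H; have l2 := @ln2_gt0.
have n0 : (0 : R) < n%:R by rewrite ltr0n (ltnW Hn).
have Hs : c' / 4 * lg n%:R < (train_size c n)%:R / (2 ^ #|vars t|)%:R.
  by apply: (lt_le_trans H); rewrite ler_wpM2l ?ler0n // gen_err_all_fn.
rewrite mulrDl mul1r lerD //; last by apply: miss_prob_le_invn Hs => //; lra.
by rewrite ler_pM2r ?invr_gt0 // (dim_le_lg c0 _ Hn Hs) //; lra.
Qed.

Lemma horizon_le (K D L : R) n : 0 < K -> 0 <= D -> 1 <= L -> (0 < n)%N ->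
  (Num.truncn (K * L))%:R * ((D * L + 1) / n%:R) <= K * (D + 1) * L ^+ 2 / n%:R.
Proof.
move=> K0 D0 L1 n0; have L0 : 0 <= L by apply: le_trans L1.
have e0 : 0 <= (D * L + 1) / n%:R by rewrite divr_ge0 ?addr_ge0 ?mulr_ge0 ?ler0n ?ler01.
have HT : (Num.truncn (K * L))%:R <= K * L by rewrite truncn_le mulr_ge0 // ltW.
apply: le_trans (ler_wpM2r e0 HT) _.
have KLL : 0 <= K * L * (L - 1) by rewrite !mulr_ge0 ?subr_ge0 // ltW.
rewrite !mulrA ler_wpM2r ?invr_ge0 ?ler0n //; nra.
Qed.

End Asymptotics.

Local Open Scope ring_scope.

Theorem lemma10 (R : realType) (c : R) :
  0 < c ->
  exists c0 : R, forall c' : R, c0 <= c' ->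
  forall K : R, 0 < K ->
  exists C : R, exists N : nat,
  forall n : nat, (N <= n)%N ->
  forall ell : nat, (n <= ell)%N ->
  forall tgt : fn,
    pbad n ell tgt (train_size c n) c' (Num.truncn (K * lg n%:R)) None
      <= C * (lg n%:R) ^+ 2 / n%:R.
Proof.
move=> c0; exists (8 + 8 * ln 2) => c' Hc' K K0.
have D0 : 0 <= c + 2 / ln 2 by rewrite addr_ge0 ?divr_ge0 ?ltW ?ln2_gt0.
exists (K * (c + 2 / ln 2 + 1)), 2%N => n Hn ell _ tgt.
have L1 := @lg_ge1 R n Hn; have L0 : 0 <= lg n%:R :> R by apply: le_trans L1.
have e0 : 0 <= ((c + 2 / ln 2) * lg n%:R + 1) / n%:R :=
  divr_ge0 (addr_ge0 (mulr_ge0 D0 L0) ler01) (ler0n _ n).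
apply: le_trans (horizon_le K0 D0 L1 (ltnW Hn)).
apply: (pbad_le_union _ e0) => // t /andP [Ht _].
exact: step_bad_le.
Qed.
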